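(* Let $n\ge1$, $m=2^n$, and let $\mathcal{B}$ be a nontrivial boolean algebra. The number of ordered pairs $(A_1,A_2)$ of subsets of $\{0,1\}^n$ such that the algebraic sets $V_{\mathcal{B}}(S_{A_1})$ and $V_{\mathcal{B}}(S_{A_2})$ are isomorphic equals $\binom{2m}{m}$. Hence the proportion of such pairs among all $4^m$ ordered pairs is $\binom{2m}{m}/4^m$, which is asymptotically equal to $\frac{1}{\sqrt{\pi m}}$ as $n\to\infty$.
   Context: Boolean algebras are in the language $\{\vee,\cdot,\bar{\ },0,1\}$. Orthogonal variables: $Z=\{z_\alpha:\alpha\in\{0,1\}^n\}$, $|Z|=m=2^n$. For $A\subseteq\{0,1\}^n$ the orthogonal system is $$S_A=\{z_\alpha=0\mid\alpha\in A\}\cup\{z_\alpha z_\beta=0\mid \alpha\ne\beta\}\cup\{\textstyle\bigvee_{\alpha}z_\alpha=1\},$$ and $V_{\mathcal{B}}(S)$ is its solution set over $\mathcal{B}$. For an algebraic set $Y$, $t\sim_Y s$ on terms iff $t(P)=s(P)$ for all $P\in Y$; the quotient is the coordinate algebra $\Gamma_{\mathcal{B}}(Y)$. Two algebraic sets are isomorphic if their coordinate algebras are isomorphic as boolean algebras. *)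

From HB Require Import structures.
From mathcomp Require Import all_boot all_order.
From Stdlib Require Import Reals.
Set Implicit Arguments. Unset Strict Implicit. Unset Printing Implicit Defensive.
Import Order.TTheory.
Local Open Scope order_scope.

Definition bvec (n : nat) := {ffun 'I_n -> bool}.

Inductive term (V : Type) : Type :=
  | TVar of V
  | TJoin of term V & term V
  | TMeet of term V & term V
  | TCompl of term V
  | TZero
  | TOne.
Arguments TZero {V}.
Arguments TOne {V}.

Section Eval.
Context {disp : Order.disp_t} (B : ctbDistrLatticeType disp) {V : Type}.

Fixpoint teval (P : V -> B) (t : term V) : B :=
  match t with
  | TVar v => P v
  | TJoin t1 t2 => teval P t1 `|` teval P t2
  | TMeet t1 t2 => teval P t1 `&` teval P t2
  | TCompl t1 => ~` teval P t1
  | TZero => \bot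
  | TOne => \top
  end.

Definition solset (S : term V * term V -> Prop) : (V -> B) -> Prop :=
  fun P => forall e, S e -> teval P e.1 = teval P e.2.

Definition tequiv (Y : (V -> B) -> Prop) (t s : term V) : Prop :=
  forall P, Y P -> teval P t = teval P s.

(* Isomorphism of the coordinate algebras Gamma_B(Y1) = term/~_Y1 and
   Gamma_B(Y2) = term/~_Y2, expressed without forming the quotients:
   a map of representatives F inducing a well-defined boolean-algebra
   homomorphism Gamma(Y1) -> Gamma(Y2), with a two-sided inverse induced by G. *)
Definition coord_iso (Y1 Y2 : (V -> B) -> Prop) : Prop :=
  exists (F G : term V -> term V),
    (forall t s, tequiv Y1 t s -> tequiv Y2 (F t) (F s))
    /\ (forall t s, tequiv Y2 (F (TJoin t s)) (TJoin (F t) (F s)))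
    /\ (forall t s, tequiv Y2 (F (TMeet t s)) (TMeet (F t) (F s)))
    /\ (forall t, tequiv Y2 (F (TCompl t)) (TCompl (F t)))
    /\ tequiv Y2 (F TZero) TZero
    /\ tequiv Y2 (F TOne) TOne
    /\ (forall t s, tequiv Y2 t s -> tequiv Y1 (G t) (G s))
    /\ (forall t, tequiv Y1 (G (F t)) t)
    /\ (forall s, tequiv Y2 (F (G s)) s).
End Eval.

Definition bigjoin_term (V : finType) : term V :=
  foldr (fun a t => TJoin (TVar a) t) TZero (enum V).

Definition orth_sys (n : nat) (A : {set bvec n}) : term (bvec n) * term (bvec n) -> Prop :=
  fun e =>
    (exists a, a \in A /\ e = (TVar a, TZero))
    \/ (exists a b, a != b /\ e = (TMeet (TVar a) (TVar b), TZero))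
    \/ e = (bigjoin_term (bvec n), TOne).

Definition VS {disp : Order.disp_t} (B : ctbDistrLatticeType disp) (n : nat)
  (A : {set bvec n}) : (bvec n -> B) -> Prop :=
  @solset disp B (bvec n) (orth_sys A).

Definition asym_ratio (n : nat) : R :=
  (INR 'C(2 * 2 ^ n, 2 ^ n) / (4 ^ (2 ^ n)%nat) * sqrt (PI * INR (2 ^ n)))%R.
Arguments VS {disp} B {n} A.

(* A solution of the orthogonal system S_A is a partition of unity (P a)_a of B
   indexed by {0,1}^n whose blocks with index in A vanish.  Evaluating a term t
   at such a partition gives the join of the blocks indexed by its support
   tsupp t, the value of t in the power-set algebra at the atoms {a}.  Since B is
   nontrivial, the partitions concentrated at one point a outside A separate terms,
   so t ~ s iff tsupp t and tsupp s agree off A, and the coordinate algebra of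
   V(S_A) is the power set of the complement of A.  Hence the two coordinate
   algebras are isomorphic iff |A1| = |A2| (one inequality from a retraction
   between the coordinate algebras, the other by renaming variables along a
   permutation carrying A1 onto A2), and Vandermonde counts these pairs as
   sum_k C(m,k)^2 = C(2m,m).
   The asymptotics is Wallis' argument: W_k = int_0^(pi/2) sin^k satisfies
   (k+1) W_k = (k+2) W_(k+2), so W_(2M) = pi/2 C(2M,M)/4^M, and the squeeze
   k W_k^2 <= pi/2 <= (k+1) W_k^2 follows from (k+1) W_(k+1) W_k = pi/2 and
   the monotonicity of W. *)

From HB Require Import structures.
From mathcomp Require Import all_boot all_order perm zify.
From Stdlib Require Import Reals Lra.
From Coquelicot Require Coquelicot.
Set Implicit Arguments. Unset Strict Implicit. Unset Printing Implicit Defensive.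
Import Order.TTheory Order.CTheory.

Section Terms.
Variable V : finType.
Local Open Scope order_scope.

Definition tjoin (s : seq V) : term V := foldr (fun a t => TJoin (TVar a) t) TZero s.

Fixpoint tsupp (t : term V) : {set V} :=
  match t with
  | TVar a => [set a]
  | TJoin t1 t2 => tsupp t1 :|: tsupp t2
  | TMeet t1 t2 => tsupp t1 :&: tsupp t2
  | TCompl t1 => ~: tsupp t1
  | TZero => set0
  | TOne => setT
  end.

Lemma tsupp_tjoin (s : seq V) : tsupp (tjoin s) = [set a | a \in s].
Proof.
elim: s => [|a s IH] /=; first by apply/setP=> x; rewrite !inE.
by rewrite IH; apply/setP=> x; rewrite !inE.
Qed.

Fixpoint tmap (f : V -> V) (t : term V) : term V :=
  match t with
  | TVar a => TVar (f a)
  | TJoin t1 t2 => TJoin (tmap f t1) (tmap f t2)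
  | TMeet t1 t2 => TMeet (tmap f t1) (tmap f t2)
  | TCompl t1 => TCompl (tmap f t1)
  | TZero => TZero
  | TOne => TOne
  end.

Variables (disp : Order.disp_t) (B : ctbDistrLatticeType disp).
Implicit Types (P Q : V -> B) (t : term V).

Lemma teval_tmap P f t : teval P (tmap f t) = teval (P \o f) t.
Proof. by elim: t => //= [t1 -> t2 ->|t1 -> t2 ->|t1 ->]. Qed.

Lemma eq_teval P Q t : P =1 Q -> teval P t = teval Q t.
Proof. by move=> eqPQ; elim: t => /= [a|t1 -> t2 ->|t1 -> t2 ->|t1 ->||]. Qed.

Lemma teval_tjoin P s : teval P (tjoin s) = \join_(a <- s) P a.
Proof. by elim: s => [|a s IH]; rewrite ?big_nil ?big_cons //= IH. Qed.

Lemma teval_bigjoin_term P : teval P (bigjoin_term V) = \join_a P a.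
Proof. by rewrite [bigjoin_term V]/(tjoin _) teval_tjoin big_enum. Qed.

Definition orthogonal P := forall a b, a != b -> P a `&` P b = \bot.

Lemma meet_teval P a t : orthogonal P ->
  P a `&` teval P t = if a \in tsupp t then P a else \bot.
Proof.
move=> orthP; elim: t => [b|t1 IH1 t2 IH2|t1 IH1 t2 IH2|t1 IH1| |] /=; rewrite ?inE.
- by case: eqP => [->|/eqP]; [rewrite meetxx | apply: orthP].
- by rewrite meetUr IH1 IH2; do 2 case: ifP; rewrite ?joinxx ?joinx0 ?join0x.
- rewrite -{1}(meetxx (P a)) meetACA IH1 IH2.
  by do 2 case: ifP; rewrite ?meetxx ?meetx0 ?meet0x.
- case: (a \in tsupp t1) IH1 => IH1 /=.
  + by rewrite -IH1 -meetA meetxC meetx0.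
  + by rewrite -{2}(meetx1 (P a)) -(joinxC (teval P t1)) meetUr IH1 join0x.
- by rewrite meetx0.
- by rewrite meetx1.
Qed.

Lemma teval_orthogonal P t : orthogonal P -> \join_a P a = \top ->
  teval P t = \join_(a in tsupp t) P a.
Proof.
move=> orthP joinP; rewrite -[LHS]meetx1 -joinP [RHS]big_mkcond /=.
rewrite (big_endo (Order.meet _)) ?meetx0 //; last exact: meetUr.
by apply: eq_bigr => a _; rewrite meetC meet_teval.
Qed.

Definition dirac (x : V) : V -> B := fun a => if a == x then \top else \bot.

Lemma orthogonal_dirac x : orthogonal (dirac x).
Proof.
move=> a b neq_ab; rewrite /dirac.
case: (a =P x) => [eq_ax | _]; last by rewrite meet0x.
case: (b =P x) => [eq_bx | _]; last by rewrite meetx0.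
by rewrite eq_ax eq_bx eqxx in neq_ab.
Qed.

Lemma bigjoin_dirac x : \join_a dirac x a = \top.
Proof. by rewrite (bigD1 x) //= /dirac eqxx join1x. Qed.

Lemma teval_dirac x t : teval (dirac x) t = if x \in tsupp t then \top else \bot.
Proof.
rewrite teval_orthogonal ?bigjoin_dirac //; last exact: orthogonal_dirac.
rewrite (big_mkcond (mem (tsupp t))) (bigD1 x) //= big1 ?joinx0.
  by rewrite /dirac eqxx; case: ifP.
by move=> a /negbTE neq_ax; rewrite /dirac neq_ax; case: ifP.
Qed.

End Terms.

Lemma index_cat_lt (T : eqType) (s1 s2 : seq T) x :
  (index x (s1 ++ s2) < size s1) = (x \in s1).
Proof. by rewrite index_cat; case: ifP => [xs | _]; rewrite ?index_mem // ltnNge leq_addr. Qed.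

Lemma perm_of_card_eq (T : finType) (A1 A2 : {set T}) : #|A1| = #|A2| ->
  exists s : {perm T}, forall x, (s x \in A2) = (x \in A1).
Proof.
move=> eqA; pose e (A : {set T}) := enum A ++ enum (~: A).
have mem_e A x : x \in e A by rewrite mem_cat !mem_enum inE orbN.
have uniq_e A : uniq (e A).
  by rewrite cat_uniq !enum_uniq andbT /=; apply/hasPn => x; rewrite !mem_enum inE.
have size_e A : size (e A) = #|T|.
  by rewrite size_cat -!cardE cardsC.
pose f x := nth x (e A2) (index x (e A1)).
have index_f x : index (f x) (e A2) = index x (e A1).
  by apply: index_uniq; rewrite // size_e -(size_e A1) index_mem.
have inj_f : injective f.
  by move=> x y /(congr1 (index^~ (e A2))); rewrite !index_f; apply: index_inj.
have mem_index (A : {set T}) y : (y \in A) = (index y (e A) < #|A|).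
  by rewrite cardE index_cat_lt mem_enum.
by exists (perm inj_f) => x; rewrite permE mem_index index_f -eqA -mem_index.
Qed.

Section OrthogonalSystem.
Variables (n : nat) (disp : Order.disp_t) (B : ctbDistrLatticeType disp).
Local Notation T := (bvec n).
Local Open Scope order_scope.
Implicit Types (A : {set T}) (P : T -> B) (t s : term T).

Lemma VSP A P : VS B A P <->
  [/\ {in A, forall a, P a = \bot}, orthogonal P & \join_a P a = \top].
Proof.
split=> [solP | [zeroP orthP joinP] e].
- split=> [a aA | a b neq_ab |].
  + by apply: (solP (TVar a, TZero)); left; exists a.
  + by apply: (solP (TMeet (TVar a) (TVar b), TZero)); right; left; exists a, b.
  + by rewrite -teval_bigjoin_term; apply: (solP (_, TOne)); right; right.
by case=> [[a [aA ->]] | [[a [b [neq_ab ->]]] | ->]] /=; rewrite ?teval_bigjoin_term; auto.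
Qed.

Lemma teval_VS A P t : VS B A P -> teval P t = \join_(a in tsupp t :\: A) P a.
Proof.
case/VSP=> zeroP orthP joinP; rewrite teval_orthogonal // [LHS]big_mkcond [RHS]big_mkcond.
by apply: eq_bigr => a _; rewrite !inE; case: (boolP (a \in A)) => [/zeroP ->|]; case: ifP.
Qed.

Lemma VS_dirac A x : x \notin A -> VS B A (dirac B x).
Proof.
move=> xA; apply/VSP; split; [|exact: orthogonal_dirac | exact: bigjoin_dirac].
by move=> a aA; rewrite /dirac; case: eqP => // eq_ax; rewrite -eq_ax aA in xA.
Qed.

Lemma VS_comp_perm (s : {perm T}) A1 A2 P : {in A1, forall a, s a \in A2} ->
  VS B A2 P -> VS B A1 (P \o s).
Proof.
move=> sA /VSP[zeroP orthP joinP]; apply/VSP; split=> [a /sA /zeroP // | a b neq_ab |].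
  by apply: orthP; rewrite (inj_eq perm_inj).
by rewrite -joinP [RHS](reindex_inj (@perm_inj _ s)).
Qed.

Lemma coord_iso_perm (s : {perm T}) A1 A2 : (forall x, (s x \in A2) = (x \in A1)) ->
  coord_iso (VS B A1) (VS B A2).
Proof.
move=> sA.
have sA1 : {in A1, forall a, s a \in A2} by move=> a; rewrite sA.
have sA2 : {in A2, forall a, (s^-1)%g a \in A1} by move=> a; rewrite -sA permKV.
exists (tmap s), (tmap (s^-1)%g); do !split=> //.
- by move=> t t' eq_t P /(VS_comp_perm sA1) solP; rewrite !teval_tmap eq_t.
- by move=> t t' eq_t P /(VS_comp_perm sA2) solP; rewrite !teval_tmap eq_t.
- by move=> t P _; rewrite !teval_tmap; apply: eq_teval => a /=; rewrite permK.
- by move=> t P _; rewrite !teval_tmap; apply: eq_teval => a /=; rewrite permKV.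
Qed.

Hypothesis nontrivB : (\bot : B) != \top.

Lemma tequiv_VS A t s : tequiv (VS B A) t s <-> tsupp t :\: A = tsupp s :\: A.
Proof.
split=> [eq_ts | eq_supp P solP]; last by rewrite !(teval_VS _ solP) eq_supp.
apply/setP=> x; rewrite !inE; case: (boolP (x \in A)) => //= xA.
have := eq_ts _ (VS_dirac xA); rewrite !teval_dirac.
by do 2 case: ifP => // _; move=> eq_bt; move: nontrivB; rewrite eq_bt eqxx.
Qed.

(* S |-> F (\/ S) embeds the power set of ~: A1 into that of ~: A2. *)
Lemma card_setC_le_of_retraction A1 A2 (F G : term T -> term T) :
  (forall t s, tequiv (VS B A2) t s -> tequiv (VS B A1) (G t) (G s)) ->
  (forall t, tequiv (VS B A1) (G (F t)) t) ->
  (#|~: A1| <= #|~: A2|)%nat.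
Proof.
move=> congrG retrGF.
pose phi (S : {set T}) := tsupp (F (tjoin (enum S))) :\: A2.
have inj_phi : {in powerset (~: A1) &, injective phi}.
  move=> S1 S2; rewrite !inE => subS1 subS2 /tequiv_VS /congrG eqG.
  have : tequiv (VS B A1) (tjoin (enum S1)) (tjoin (enum S2)).
    by move=> P solP; rewrite -(retrGF _ P solP) (eqG P solP) retrGF.
  have suppD (S : {set T}) : S \subset ~: A1 -> tsupp (tjoin (enum S)) :\: A1 = S.
    move=> /subsetP subS; apply/setP=> x; rewrite tsupp_tjoin !inE mem_enum.
    by apply/andb_idl=> /subS; rewrite inE.
  by rewrite tequiv_VS !suppD.
rewrite -(@leq_exp2l 2) // -!card_powerset -(card_in_imset inj_phi).
by apply: subset_leq_card; apply/subsetP=> _ /imsetP[S _ ->]; rewrite inE subsetDr.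
Qed.

Lemma coord_iso_VS_card A1 A2 : coord_iso (VS B A1) (VS B A2) <-> #|A1| = #|A2|.
Proof.
split=> [[F [G [congrF [_ [_ [_ [_ [_ [congrG [retrGF retrFG]]]]]]]]]] | eqA].
  have le12 := card_setC_le_of_retraction congrG retrGF.
  have le21 := card_setC_le_of_retraction congrF retrFG.
  have eqC : #|~: A1| = #|~: A2| by apply/eqP; rewrite eqn_leq le12 le21.
  by apply/eqP; rewrite -(eqn_add2r #|~: A1|) {2}eqC !cardsC.
by have [s sA] := perm_of_card_eq eqA; exact: coord_iso_perm sA.
Qed.

End OrthogonalSystem.

(* Importing Reals rebinds [^] on nat to [Nat.pow]. *)
Lemma natpowE m k : Nat.pow m k = expn m k.
Proof. by elim: k => //= k ->; rewrite expnS. Qed.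

Lemma card_equicardinal_pairs (T : finType) :
  #|[set p : {set T} * {set T} | #|p.1| == #|p.2|]| = 'C(2 * #|T|, #|T|).
Proof.
set m := #|T|; rewrite mul2n -addnn -Vandermonde -sum1_card.
rewrite (partition_big (fun p : {set T} * {set T} => inord #|p.1| : 'I_m.+1) xpredT) //=.
apply: eq_bigr => k _; rewrite bin_sub ?leq_ord // -card_draws -cardsX -sum1_card.
apply: eq_bigl => -[S1 S2]; rewrite !inE /=.
have le_S1 : #|S1| < m.+1 by rewrite ltnS max_card.
apply/andP/andP => [[/eqP <- /eqP <-] | [/eqP eqS1 /eqP eqS2]].
  by rewrite inordK.
by rewrite eqS1 eqS2; split; last apply/eqP/val_inj; rewrite /= ?inordK ?eqS1.
Qed.

Lemma card_set_pairs (T : finType) : #|{: {set T} * {set T}}| = 4 ^ #|T|.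
Proof. by rewrite natpowE card_prod -cardsT -powersetT card_powerset cardsT -expnMn. Qed.

Lemma central_binomial_rec M :
  'C(2 * M.+1, M.+1) * (M.+1 * M.+1) = 'C(2 * M, M) * ((2 * M).+1 * (2 * M).+2).
Proof.
have symC : 'C((2 * M).+1, M.+1) = 'C((2 * M).+1, M).
  by rewrite -bin_sub; [congr 'C(_, _); lia | lia].
have step1 := mul_bin_diag (2 * M).+2 M.
have step2 := mul_bin_diag (2 * M).+1 M.
rewrite /= symC in step1 step2.
rewrite (_ : 2 * M.+1 = (2 * M).+2); last lia.
rewrite mulnA (mulnC 'C(_.+2, _)) -step1 -mulnA (mulnC 'C(_.+1, M)) -step2.
by rewrite mulnA mulnC (mulnC (2 * M).+2).
Qed.

Module Wallis.
Import Coquelicot.Coquelicot.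
Local Open Scope R_scope.

Definition wallis (k : nat) : R := RInt (fun x => sin x ^ k) 0 (PI / 2).

Lemma continuous_sin_pow k x : continuous (fun x => sin x ^ k) x.
Proof. by apply/continuity_pt_filterlim; apply: derivable_continuous_pt; reg. Qed.

Lemma ex_RInt_wallis k : ex_RInt (fun x => sin x ^ k) 0 (PI / 2).
Proof. by apply: ex_RInt_continuous => x _; apply: continuous_sin_pow. Qed.

Lemma is_derive_sin_pow_cos k x : is_derive (fun x => sin x ^ k.+1 * cos x) x
  (INR k.+1 * sin x ^ k - INR k.+2 * sin x ^ k.+2).
Proof.
auto_derive => //.
(* [auto_derive] unfolds [INR k.+1] one step. *)
rewrite (_ : match k with O => 1 | _.+1 => INR k + 1 end = INR k.+1); last by case: k.
have cos2 : cos x ^ 2 = 1 - sin x ^ 2 by have := sin2_cos2 x; rewrite /Rsqr /=; lra.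
transitivity (INR k.+1 * sin x ^ k * cos x ^ 2 - sin x ^ k.+2); first by rewrite /=; ring.
by rewrite cos2 [INR k.+2]S_INR /=; ring.
Qed.

Lemma wallis_rec k : INR k.+1 * wallis k = INR k.+2 * wallis k.+2.
Proof.
have ftc := is_RInt_derive (fun x => sin x ^ k.+1 * cos x) _ 0 (PI / 2)
  (fun x _ => is_derive_sin_pow_cos k x)
  (fun x _ => ltac:(apply/continuity_pt_filterlim; apply: derivable_continuous_pt; reg)).
have lin := is_RInt_minus _ _ _ _ _ _
  (is_RInt_scal _ _ _ (INR k.+1) _ (RInt_correct _ _ _ (ex_RInt_wallis k)))
  (is_RInt_scal _ _ _ (INR k.+2) _ (RInt_correct _ _ _ (ex_RInt_wallis k.+2))).
have := is_RInt_unique _ _ _ _ lin; rewrite (is_RInt_unique _ _ _ _ ftc) cos_PI2 sin_0.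
rewrite -/(wallis k) -/(wallis k.+2); set a := INR k.+1; set b := INR k.+2.
rewrite /minus /plus /opp /scal /= /mult /=; lra.
Qed.

Lemma wallis0 : wallis 0 = PI / 2.
Proof. by rewrite /wallis /= RInt_const /scal /= /mult /=; ring. Qed.

Lemma wallis1 : wallis 1 = 1.
Proof.
have ftc := is_RInt_derive (fun x => - cos x) (fun x => sin x ^ 1) 0 (PI / 2)
  (fun x _ => ltac:(auto_derive => //; ring)) (fun x _ => @continuous_sin_pow 1 x).
by rewrite /wallis (is_RInt_unique _ _ _ _ ftc) cos_PI2 cos_0 /minus /plus /opp /=; ring.
Qed.

Lemma wallis_ge0 k : 0 <= wallis k.
Proof.
apply: RInt_ge_0; [have := PI_RGT_0; lra | exact: ex_RInt_wallis |].
by move=> x [x_gt0 x_lt]; apply: pow_le; apply: sin_ge_0; lra.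
Qed.

Lemma wallis_decr k : wallis k.+1 <= wallis k.
Proof.
apply: RInt_le; [have := PI_RGT_0; lra | exact: ex_RInt_wallis | exact: ex_RInt_wallis |].
move=> x [x_gt0 x_lt] /=.
have sin_ge0 : 0 <= sin x by apply: sin_ge_0; lra.
have := SIN_bound x; have := pow_le _ k sin_ge0; nra.
Qed.

Lemma wallis_prod k : INR k.+1 * wallis k.+1 * wallis k = PI / 2.
Proof.
elim: k => [|k IH]; first by rewrite wallis0 wallis1 /=; ring.
by rewrite -wallis_rec -IH; ring.
Qed.

Lemma wallis_sq_bounds (k : nat) : (0 < k)%nat ->
  INR k * wallis k ^ 2 <= PI / 2 <= INR k.+1 * wallis k ^ 2.
Proof.
case: k => [//|k] _; split; [rewrite -(wallis_prod k) | rewrite -(wallis_prod k.+1)].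
all: rewrite ?[INR k.+2]S_INR; have := wallis_decr k; have := wallis_decr k.+1.
all: have := wallis_ge0 k.+2; have := wallis_ge0 k.+1; have := pos_INR k.+1.
all: set m := INR k.+1; set c := wallis k; set a := wallis k.+1; set b := wallis k.+2.
all: move=> m_ge0 a_ge0 b_ge0 ba ac.
- have : 0 <= m * a * (c - a) by apply: Rmult_le_pos; [apply: Rmult_le_pos | lra].
  by rewrite /=; lra.
- have : 0 <= (m + 1) * a * (a - b) by apply: Rmult_le_pos; [apply: Rmult_le_pos | ]; lra.
  by rewrite /=; lra.
Qed.

Definition central_ratio M := INR 'C(2 * M, M) / 4 ^ M.

Lemma central_ratioS M :
  central_ratio M.+1 = central_ratio M * (2 * INR M + 1) / (2 * INR M + 2).
Proof.
have := f_equal INR (central_binomial_rec M); rewrite !mult_INR !S_INR mult_INR /= => rec.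
have M_ge0 := pos_INR M; have pow4 : 4 ^ M <> 0 by apply: pow_nonzero; lra.
rewrite /central_ratio; have -> : INR 'C(2 * M.+1, M.+1) =
    INR 'C(2 * M, M) * ((2 * INR M + 1) * (2 * INR M + 2)) / ((INR M + 1) * (INR M + 1)).
  by apply: (Rmult_eq_reg_r ((INR M + 1) * (INR M + 1))); [rewrite rec; field | ]; nra.
by rewrite /=; field; lra.
Qed.

Lemma wallis_even M : wallis (2 * M) = PI / 2 * central_ratio M.
Proof.
elim: M => [|M IH]; first by rewrite wallis0 /central_ratio bin0 /=; field.
have := wallis_rec (2 * M); rewrite IH !S_INR mult_INR /= => rec.
have M_ge0 := pos_INR M.
rewrite mulnS add2n central_ratioS; apply: (Rmult_eq_reg_l (2 * INR M + 2)); last lra.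
rewrite (_ : 2 * INR M + 2 = (1 + 1) * INR M + 1 + 1); last ring.
by rewrite -rec; field; lra.
Qed.

Lemma central_ratio_sq_bounds (M : nat) : (0 < M)%nat ->
  1 - / INR M <= central_ratio M ^ 2 * (PI * INR M) <= 1.
Proof.
move=> M_gt0; have m_ge1 : 1 <= INR M by apply: (le_INR 1); apply/ssrnat.leP.
have pi2_gt0 : 0 < PI / 2 by have := PI_RGT_0; lra.
have [] := wallis_sq_bounds (_ : (0 < 2 * M)%nat); first by rewrite muln_gt0.
rewrite wallis_even S_INR mult_INR [INR 2]/=.
set c := central_ratio M; set x := c ^ 2 * (PI * INR M) => upper lower.
have x_le1 : x <= 1.
  apply: (Rmult_le_reg_l (PI / 2)) => //.
  rewrite (_ : PI / 2 * x = (1 + 1) * INR M * (PI / 2 * c) ^ 2); [lra | rewrite /x; field].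
have z_ge1 : 1 <= (2 * INR M + 1) * PI * c ^ 2 / 2.
  apply: (Rmult_le_reg_l (PI / 2)) => //.
  rewrite (_ : PI / 2 * ((2 * INR M + 1) * PI * c ^ 2 / 2) =
    ((1 + 1) * INR M + 1) * (PI / 2 * c) ^ 2); [lra | field].
have : 2 * INR M * 1 <= 2 * INR M * ((2 * INR M + 1) * PI * c ^ 2 / 2).
  by apply: Rmult_le_compat_l; lra.
have -> : 2 * INR M * ((2 * INR M + 1) * PI * c ^ 2 / 2) = x * (2 * INR M + 1).
  by rewrite /x; field.
move=> lower'; split => //.
apply: (Rmult_le_reg_l (INR M)); first lra.
rewrite Rmult_minus_distr_l Rmult_1_r (_ : INR M * / INR M = 1); [lra | field; lra].
Qed.

Lemma central_ratio_ge0 M : 0 <= central_ratio M.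
Proof. by apply: Rdiv_le_0_compat; [apply: pos_INR | apply: pow_lt; lra]. Qed.

Lemma central_ratio_asymptotic :
  is_lim_seq (fun M => central_ratio M * sqrt (PI * INR M)) 1.
Proof.
apply: (is_lim_seq_le_le_loc (fun M => 1 - / INR M) _ (fun _ => 1)); last first.
- exact: is_lim_seq_const.
- have inv_INR : is_lim_seq (fun M => / INR M) 0.
    by apply: (is_lim_seq_inv _ p_infty); [exact: is_lim_seq_INR | ].
  by have := is_lim_seq_minus' _ _ _ _ (is_lim_seq_const 1) inv_INR; rewrite Rminus_0_r.
exists 1%nat => M /ssrnat.ltP /central_ratio_sq_bounds.
have r_ge0 : 0 <= central_ratio M * sqrt (PI * INR M).
  by apply: Rmult_le_pos; [apply: central_ratio_ge0 | apply: sqrt_pos].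
have sq : (central_ratio M * sqrt (PI * INR M)) ^ 2 = central_ratio M ^ 2 * (PI * INR M).
  rewrite Rpow_mult_distr pow2_sqrt //.
  by apply: Rmult_le_pos; [have := PI_RGT_0; lra | apply: pos_INR].
rewrite -sq; nra.
Qed.

Lemma central_ratio_pow2_cvg :
  Un_cv (fun n => central_ratio (2 ^ n) * sqrt (PI * INR (2 ^ n))) 1.
Proof.
apply/is_lim_seq_Reals.
apply: (is_lim_seq_subseq (fun M => central_ratio M * sqrt (PI * INR M)) _ (fun n => 2 ^ n)%nat);
  last exact: central_ratio_asymptotic.
by apply: eventually_subseq => k; apply: Nat.pow_lt_mono_r; lia.
Qed.

End Wallis.

Theorem mainTheorem6 (n : nat) (hn : (1 <= n)%N)
  (disp : Order.disp_t) (B : ctbDistrLatticeType disp)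
  (hB : ((\bot : B) != \top)%O) :
  exists S : {set {set bvec n} * {set bvec n}},
    [/\ (forall A1 A2 : {set bvec n},
           (A1, A2) \in S <-> coord_iso (VS B A1) (VS B A2)),
        #|S| = 'C(2 * 2 ^ n, 2 ^ n),
        #|{: {set bvec n} * {set bvec n}}| = 4 ^ (2 ^ n) &
        Un_cv asym_ratio 1%R].
Proof.
have card_bvec : #|bvec n| = 2 ^ n by rewrite natpowE card_ffun card_bool card_ord.
exists [set p : {set bvec n} * {set bvec n} | #|p.1| == #|p.2|]; split.
- move=> A1 A2; rewrite inE /=.
  by split=> [/eqP/(coord_iso_VS_card hB) // | /(coord_iso_VS_card hB) ->].
- by rewrite card_equicardinal_pairs card_bvec.
- by rewrite card_set_pairs card_bvec.
- exact: Wallis.central_ratio_pow2_cvg.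
Qed.
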